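(* The following are equivalent for an integral domain $D$: (1) for every nonzero nonunit $x$ of $D$, $xD$ is a $\ast$-product of finitely many $\ast$-f-homog ideals of type $1$; (2) $D$ is a GCD domain that is a $\ast$-GKD.
   Context: $\ast$ is a star operation on $D$ of finite character. A $\ast$-ideal is a nonzero fractional ideal $I$ with $I^\ast=I$; of finite type if $I=J^\ast$ for some nonzero finitely generated $J$. A maximal $\ast$-ideal is an integral $\ast$-ideal maximal among proper integral $\ast$-ideals. A $\ast$-homog ideal is a proper integral $\ast$-ideal $I$ of finite type such that $(A+B)^\ast\neq D$ for every pair $A,B$ of proper integral $\ast$-ideals of finite type containing $I$; it lies in a unique maximal $\ast$-ideal $M(I)$. It is of type $1$ if for each $x\in M(I)\setminus\{0\}$ there is $n\ge1$ with $x^nD_{M(I)}\cap D\subseteq I$. A $\ast$-f-homog ideal is a $\ast$-homog ideal $I$ such that every $\ast$-ideal of finite type containing $I$ is principal; it is of type $1$ if it is also a $\ast$-homog ideal of type $1$. $D$ is a $\ast$-IRKT if $D_P$ is a valuation domain for every maximal $\ast$-ideal $P$, $D=\bigcap_P D_P$ over the maximal $\ast$-ideals with the intersection locally finite, and no two distinct maximal $\ast$-ideals contain a common nonzero prime ideal; $D$ is a $\ast$-GKD if it is a $\ast$-IRKT all of whose maximal $\ast$-ideals have height $1$. *)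

(* An integral domain D is represented as a subring of a
   field K such that K is the quotient field of D.  Subsets of K (in
   particular fractional ideals) are predicates K -> Prop, compared with
   extensional equality [seteq]. *)
From HB Require Import structures.
From Stdlib Require List.
From mathcomp Require Import all_boot all_order all_algebra.
Set Implicit Arguments. Unset Strict Implicit. Unset Printing Implicit Defensive.
Import GRing.Theory.
Local Open Scope ring_scope.

Section Defs.
Variable K : fieldType.
Implicit Types (D A B I J P Q : K -> Prop).
Implicit Types (st : (K -> Prop) -> (K -> Prop)).

Definition subset A B : Prop := forall z, A z -> B z.
Definition seteq A B : Prop := forall z, A z <-> B z.

Definition is_domain_in D : Prop :=
  [/\ D 0, D 1, (forall a b, D a -> D b -> D (a - b)),
      (forall a b, D a -> D b -> D (a * b)) &
      (forall z, exists a b, [/\ D a, D b, b != 0 & z = a / b])].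

Definition principal D (x : K) : K -> Prop := fun z => exists d, D d /\ z = x * d.
Definition scale (x : K) A : K -> Prop := fun z => exists y, A y /\ z = x * y.
Definition nonzero A : Prop := exists z, A z /\ z != 0.

Definition Dsubmodule D A : Prop :=
  [/\ A 0, (forall y z, A y -> A z -> A (y + z)) &
      (forall d z, D d -> A z -> A (d * z))].

Definition frac_ideal D I : Prop :=
  [/\ Dsubmodule D I, nonzero I & exists d, [/\ D d, d != 0 & forall z, I z -> D (d * z)]].

Definition gen D (s : seq K) : K -> Prop :=
  fun z => exists c : nat -> K, (forall i, D (c i)) /\ z = \sum_(i < size s) c i * s`_i.

Definition fin_gen D J : Prop := exists s, seteq J (gen D s).

Definition sum_ideal A B : K -> Prop := fun z => exists a b, [/\ A a, B b & z = a + b].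

Definition mul_ideal A B : K -> Prop :=
  fun z => exists s : seq (K * K),
    (forall p, List.In p s -> A p.1 /\ B p.2) /\ z = \sum_(p <- s) p.1 * p.2.

Fixpoint prod_ideal D (l : seq (K -> Prop)) : K -> Prop :=
  match l with
  | [::] => D
  | J0 :: l' => mul_ideal J0 (prod_ideal D l')
  end.

Definition star_op D (st : (K -> Prop) -> (K -> Prop)) : Prop :=
  (forall I, frac_ideal D I -> frac_ideal D (st I)) /\
  [/\ (forall x, x != 0 -> seteq (st (principal D x)) (principal D x)),
      (forall x I, x != 0 -> frac_ideal D I -> seteq (st (scale x I)) (scale x (st I))),
      (forall I, frac_ideal D I -> subset I (st I)),
      (forall I J, frac_ideal D I -> frac_ideal D J -> subset I J -> subset (st I) (st J)) &
      (forall I, frac_ideal D I -> seteq (st (st I)) (st I))].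

Definition finite_character D st : Prop :=
  forall I, frac_ideal D I -> forall z,
    st I z <-> exists J, [/\ fin_gen D J, nonzero J, subset J I & st J z].

Definition star_fc D st : Prop := star_op D st /\ finite_character D st.

Definition star_ideal D st I : Prop := frac_ideal D I /\ seteq (st I) I.

Definition finite_type D st I : Prop :=
  star_ideal D st I /\ exists J, [/\ fin_gen D J, nonzero J & seteq I (st J)].

Definition integral D I : Prop := subset I D.
Definition proper I : Prop := ~ I 1.

Definition pint_star D st I : Prop := [/\ star_ideal D st I, integral D I & proper I].

Definition max_star D st P : Prop :=
  pint_star D st P /\ forall Q, pint_star D st Q -> subset P Q -> subset Q P.

Definition loc D P : K -> Prop :=
  fun y => exists a s, [/\ D a, D s, ~ P s & y = a / s].

Definition homog D st I : Prop :=
  [/\ pint_star D st I, finite_type D st I &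
      forall A B, pint_star D st A -> finite_type D st A ->
                  pint_star D st B -> finite_type D st B ->
                  subset I A -> subset I B -> ~ seteq (st (sum_ideal A B)) D].

Definition homog_type1 D st I : Prop :=
  homog D st I /\
  exists M, [/\ max_star D st M, subset I M &
    forall x, M x -> x != 0 -> exists n : nat, (1 <= n)%N /\
      forall z, (exists y, loc D M y /\ z = x ^+ n * y) -> D z -> I z].

Definition is_principal D J : Prop := exists x, seteq J (principal D x).

Definition fhomog D st I : Prop :=
  homog D st I /\ forall J, finite_type D st J -> subset I J -> is_principal D J.

Definition fhomog_type1 D st I : Prop := fhomog D st I /\ homog_type1 D st I.

Definition divides D (a b : K) : Prop := exists c, D c /\ b = a * c.

Definition gcd_domain D : Prop :=
  forall a b, D a -> D b -> a != 0 -> b != 0 ->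
    exists d, [/\ D d, divides D d a, divides D d b &
      forall e, D e -> divides D e a -> divides D e b -> divides D e d].

Definition valuation (V : K -> Prop) : Prop := forall z, z != 0 -> V z \/ V z^-1.

Definition prime_ideal D Q : Prop :=
  [/\ Dsubmodule D Q, integral D Q, proper Q &
      forall a b, D a -> D b -> Q (a * b) -> Q a \/ Q b].

Definition star_IRKT D st : Prop :=
  [/\ (forall P, max_star D st P -> valuation (loc D P)),
      (forall z, D z <-> (forall P, max_star D st P -> loc D P z)),
      (forall x, D x -> x != 0 -> exists l : seq (K -> Prop),
          forall P, max_star D st P -> P x -> exists Q, List.In Q l /\ seteq P Q) &
      (forall P1 P2, max_star D st P1 -> max_star D st P2 -> ~ seteq P1 P2 ->
          ~ exists Q, [/\ prime_ideal D Q, nonzero Q, subset Q P1 & subset Q P2])].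

Definition height_one D P : Prop :=
  [/\ prime_ideal D P, nonzero P &
      forall Q, prime_ideal D Q -> nonzero Q -> subset Q P -> seteq Q P].

Definition star_GKD D st : Prop :=
  star_IRKT D st /\ forall P, max_star D st P -> height_one D P.

Definition cond1 D st : Prop :=
  forall x, D x -> x != 0 -> ~ D x^-1 ->
    exists l : seq (K -> Prop),
      (forall I, List.In I l -> fhomog_type1 D st I) /\
      seteq (principal D x) (st (prod_ideal D l)).

Definition cond2 D st : Prop := gcd_domain D /\ star_GKD D st.

End Defs.

(* (1) -> (2).  By (1) every nonzero x is a unit times a product of generators a of f-homog ideals
   of type 1.  Such an a lies in exactly one maximal *-ideal: if a were in M and in N <> M, finite
   character would produce finite-type *-ideals above aD inside M and inside N whose sum has
   *-closure D.  Induction along the factorization shows that every (a, b)^* is principal, which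
   gives gcds and writes every element of K as a *-coprime fraction; hence each D_P is a valuation
   ring and D is the intersection of the D_P.  Every nonzero prime contains one of the generators,
   which gives local finiteness, independence, and, through the type 1 condition, height one.

   (2) -> (1).  In a GCD domain a finite-type *-ideal is c (t)^* where the common divisors of t are
   units, and then (t)^* = D because an element of t of least P-value lies outside P for every
   maximal *-ideal P.  For x, let P_1, ..., P_k be the maximal *-ideals containing x.  Height one
   makes some power of each y in P_i a multiple of x in D_{P_i}, and gcds then give a divisor d_i of
   x with x/d_i a unit of D_{P_i} and d_i in no other maximal *-ideal.  So x = u d_1 ... d_k with
   u a unit, and each d_i D is f-homog of type 1. *)

From Stdlib Require List.
From Stdlib Require Import Classical FunctionalExtensionality PropExtensionality.
From mathcomp Require Import all_boot all_order all_algebra ring.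
From mathcomp Require classical_sets.

Set Implicit Arguments.
Unset Strict Implicit.
Unset Printing Implicit Defensive.
Import GRing.Theory.
Local Open Scope ring_scope.

Lemma seteq_eq (K : fieldType) (A B : K -> Prop) : seteq A B -> A = B.
Proof.
by move=> h; apply: functional_extensionality => z; apply: propositional_extensionality.
Qed.

Lemma nth_choice (U T : Type) (u0 : U) (t0 : T) (s : seq U) (R : U -> T -> Prop) :
  (forall i, (i < size s)%N -> exists y, R (nth u0 s i) y) ->
  exists t : seq T, size t = size s /\ forall i, (i < size s)%N -> R (nth u0 s i) (nth t0 t i).
Proof.
elim: s => [|x s IH] h; first by exists [::].
have [y hy] := h 0%N isT.
have [t [st ht]] := IH (fun i => h i.+1).
by exists (y :: t); split => [/=|[|i] hi]; [rewrite st | | apply: ht].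
Qed.

Lemma forall2_choice (A B : Type) (R : A -> B -> Prop) (l : seq A) :
  (forall a, List.In a l -> exists b, R a b) -> exists lb, List.Forall2 R l lb.
Proof.
elim: l => [|a l IH] h; first by exists [::]; constructor.
have [b hb] := h a (or_introl erefl).
have [lb hlb] := IH (fun a' ha' => h a' (or_intror ha')).
by exists (b :: lb); constructor.
Qed.

Lemma forall2_In_l (A B : Type) (R : A -> B -> Prop) l lb a :
  List.Forall2 R l lb -> List.In a l -> exists b, List.In b lb /\ R a b.
Proof.
elim=> [|a' b l' lb' hab _ IH] //= [<- | ha]; first by exists b; split => //; left.
by have [b' [hb' h]] := IH ha; exists b'; split => //; right.
Qed.

Lemma forall2_In_r (A B : Type) (R : A -> B -> Prop) l lb b :
  List.Forall2 R l lb -> List.In b lb -> exists a, List.In a l /\ R a b.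
Proof.
elim=> [|a b' l' lb' hab _ IH] //= [<- | hb]; first by exists a; split => //; left.
by have [a' [ha' h]] := IH hb; exists a'; split => //; right.
Qed.

Lemma In_map_choice (A B : Type) (f : A -> B) (l : seq B) :
  (forall y, List.In y l -> exists x, y = f x) -> exists la, l = map f la.
Proof.
elim: l => [|y l IH] h; first by exists [::].
have [x ->] := h y (or_introl erefl).
by have [la ->] := IH (fun z hz => h z (or_intror hz)); exists (x :: la).
Qed.

Lemma prodf_In_neq0 (K : fieldType) (la : seq K) :
  (forall a, List.In a la -> a != 0) -> \prod_(a <- la) a != 0.
Proof.
elim: la => [|x la IH] h; first by rewrite big_nil oner_neq0.
by rewrite big_cons mulf_neq0 //; [apply: h; left | apply: IH => a ha; apply: h; right].
Qed.

Lemma In_filter_NoDup (T : Type) (R : T -> Prop) (l : seq T) :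
  exists L, List.NoDup L /\ forall P, List.In P L <-> List.In P l /\ R P.
Proof.
elim: l => [|Q l [L [nd h]]].
  by exists [::]; split; [constructor | move=> P; split => // -[]].
case: (classic (R Q /\ ~ List.In Q L)) => [[RQ nQ] | hn].
  exists (Q :: L); split; first by constructor.
  move=> P; rewrite /= h; split.
    by case=> [<- | [lP RP]]; split => //; [left | right].
  by case=> [[<- | lP] RP]; [left | right].
exists L; split => // P; rewrite h /=; split; first by case=> lP RP; split => //; right.
case=> [[<- | lP] RQ] //; have QL : List.In Q L by apply: NNPP => nQ; apply: hn.
by case/h: QL.
Qed.

Section Ideals.
Variables (K : fieldType) (D : K -> Prop).
Hypothesis hD : is_domain_in D.

Lemma dom0 : D 0. Proof. by case: hD. Qed.
Lemma dom1 : D 1. Proof. by case: hD. Qed.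
Lemma domB a b : D a -> D b -> D (a - b). Proof. by case: hD => _ _ h _ _; apply: h. Qed.
Lemma domM a b : D a -> D b -> D (a * b). Proof. by case: hD => _ _ _ h _; apply: h. Qed.
Lemma domN a : D a -> D (- a). Proof. by move/(domB dom0); rewrite sub0r. Qed.
Lemma domD a b : D a -> D b -> D (a + b).
Proof. by move=> ha /domN hb; have := domB ha hb; rewrite opprK. Qed.
Lemma domX a n : D a -> D (a ^+ n).
Proof. by move=> ha; elim: n => [|n IH]; rewrite ?expr0 ?exprS; [exact: dom1 | exact: domM]. Qed.
Lemma dom_fraction z : exists a b, [/\ D a, D b, b != 0 & z = a / b].
Proof. by case: hD => _ _ _ _; apply. Qed.

Lemma dom_sum n (F : 'I_n -> K) : (forall i, D (F i)) -> D (\sum_(i < n) F i).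
Proof. by move=> h; apply: (big_ind D) => //; [exact: dom0 | exact: domD]. Qed.

Lemma dom_prod_In (I : Type) (s : seq I) (F : I -> K) :
  (forall i, List.In i s -> D (F i)) -> D (\prod_(i <- s) F i).
Proof.
elim: s => [|x s IH] h; rewrite ?big_nil ?big_cons; first exact: dom1.
by apply: domM; [apply: h; left | apply: IH => i hi; apply: h; right].
Qed.

Lemma submod_sum (A : K -> Prop) n (F : 'I_n -> K) :
  Dsubmodule D A -> (forall i, A (F i)) -> A (\sum_(i < n) F i).
Proof. by case=> h0 hadd _ h; apply: (big_ind A). Qed.

Lemma submod_sum_In (A : K -> Prop) (I : Type) (s : seq I) (F : I -> K) :
  Dsubmodule D A -> (forall i, List.In i s -> A (F i)) -> A (\sum_(i <- s) F i).
Proof.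
case=> h0 hadd _; elim: s => [|x s IH] h; rewrite ?big_nil ?big_cons //.
by apply: hadd; [apply: h; left | apply: IH => i hi; apply: h; right].
Qed.

Lemma principal_submod x : Dsubmodule D (principal D x).
Proof.
split.
- by exists 0; rewrite mulr0; split => //; exact: dom0.
- by move=> y z [a [ha ->]] [b [hb ->]]; exists (a + b); rewrite mulrDr; split => //; exact: domD.
- by move=> d z hd [a [ha ->]]; exists (d * a); rewrite mulrCA; split => //; exact: domM.
Qed.

Lemma principal_self x : principal D x x.
Proof. by exists 1; rewrite mulr1; split => //; exact: dom1. Qed.

Lemma principal1 : principal D 1 = D.
Proof.
apply: seteq_eq => z; split; first by case=> d [hd ->]; rewrite mul1r.
by move=> hz; exists z; rewrite mul1r.
Qed.

Lemma principal_int a : D a -> subset (principal D a) D.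
Proof. by move=> ha z [d [hd ->]]; apply: domM. Qed.

Lemma dom_submod : Dsubmodule D D.
Proof. by have := principal_submod 1; rewrite principal1. Qed.

Lemma frac_ideal_int (A : K -> Prop) :
  Dsubmodule D A -> nonzero A -> subset A D -> frac_ideal D A.
Proof.
move=> h1 h2 h3; split => //; exists 1.
by split; [exact: dom1 | exact: oner_neq0 | move=> z /h3; rewrite mul1r].
Qed.

Lemma frac_ideal_principal x : x != 0 -> frac_ideal D (principal D x).
Proof.
move=> x0; split; [exact: principal_submod | by exists x; split; [exact: principal_self|] |].
have [a [b [ha hb b0 ->]]] := dom_fraction x.
exists b; split => // z [d [hd ->]].
by rewrite (_ : b * (a / b * d) = a * d); [exact: domM | field].
Qed.

Lemma frac_ideal_dom : frac_ideal D D.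
Proof. by have := frac_ideal_principal (oner_neq0 K); rewrite principal1. Qed.

Lemma scale_principal c x : scale c (principal D x) = principal D (c * x).
Proof.
apply: seteq_eq => z; split.
- by case=> y [[d [hd ->]] ->]; exists d; rewrite mulrA.
- by case=> d [hd ->]; exists (x * d); split; [exists d | rewrite mulrA].
Qed.

Lemma scale_inj c (A B : K -> Prop) : c != 0 -> scale c A = scale c B -> A = B.
Proof.
have sub (X Y : K -> Prop) : scale c X = scale c Y -> c != 0 -> subset X Y.
  move=> e c0 z hz; have : scale c Y (c * z) by rewrite -e; exists z.
  by case=> y [hy /(mulfI c0) ->].
by move=> c0 e; apply: seteq_eq => z; split; apply: sub.
Qed.

Lemma scale_submod c (A : K -> Prop) : Dsubmodule D A -> Dsubmodule D (scale c A).
Proof.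
case=> h0 hadd hm; split; first by exists 0; rewrite mulr0.
- by move=> y z [a [ha ->]] [b [hb ->]]; exists (a + b); rewrite mulrDr; split => //; exact: hadd.
- by move=> d z hd [a [ha ->]]; exists (d * a); rewrite mulrCA; split => //; exact: hm.
Qed.

Lemma frac_ideal_scale c (A : K -> Prop) : c != 0 -> frac_ideal D A -> frac_ideal D (scale c A).
Proof.
move=> c0 [hs [z [hz z0]] [d [hd d0 hb]]]; split; first exact: scale_submod.
  by exists (c * z); split; [exists z | rewrite mulf_neq0].
have [a [b [ha hb' b0 e]]] := dom_fraction c.
exists (d * b); split; [exact: domM | by rewrite mulf_neq0 |].
move=> y [w [hw ->]].
by rewrite (_ : d * b * (c * w) = a * (d * w)); [exact/domM/hb | rewrite e; field].
Qed.

Lemma gen_submod s : Dsubmodule D (gen D s).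
Proof.
split.
- exists (fun _ => 0); split; first by move=> _; exact: dom0.
  by rewrite big1 // => i _; rewrite mul0r.
- move=> y z [c [hc ->]] [c' [hc' ->]]; exists (fun i => c i + c' i); split.
    by move=> i; apply: domD.
  by rewrite -big_split /=; apply: eq_bigr => i _; rewrite mulrDl.
- move=> d z hd [c [hc ->]]; exists (fun i => d * c i); split.
    by move=> i; apply: domM.
  by rewrite mulr_sumr; apply: eq_bigr => i _; rewrite mulrA.
Qed.

Lemma gen_nth s i : (i < size s)%N -> gen D s (nth 0 s i).
Proof.
move=> hi; exists (fun j => if j == i then 1 else 0); split.
  by move=> j; case: ifP => _; [exact: dom1 | exact: dom0].
rewrite (bigD1 (Ordinal hi)) //= eqxx mul1r big1 ?addr0 // => j hj.
rewrite ifN ?mul0r //; apply: contra hj => /eqP e; apply/eqP/val_inj.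
Qed.

Lemma gen_mem s x : x \in s -> gen D s x.
Proof. by move=> hx; rewrite -(nth_index 0 hx); apply: gen_nth; rewrite index_mem. Qed.

Lemma gen_In s x : List.In x s -> gen D s x.
Proof.
move=> hx; apply: gen_mem; elim: s hx => //= y s IH [-> | /IH hx].
  by rewrite mem_head.
by rewrite inE hx orbT.
Qed.

Lemma gen_min s (A : K -> Prop) : Dsubmodule D A ->
  (forall i, (i < size s)%N -> A (nth 0 s i)) -> subset (gen D s) A.
Proof.
move=> hA h z [c [hc ->]]; apply: (submod_sum hA) => i.
by case: hA => _ _; apply => //; exact: h.
Qed.

Lemma gen1 d : gen D [:: d] = principal D d.
Proof.
apply: seteq_eq => z; split.
- by case=> c [hc ->]; rewrite big_ord1 /=; exists (c 0%N); rewrite mulrC.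
- by case=> c [hc ->]; exists (fun _ => c); split => //; rewrite big_ord1 /= mulrC.
Qed.

Lemma common_denominator s :
  exists d, [/\ D d, d != 0 & forall i, (i < size s)%N -> D (d * nth 0 s i)].
Proof.
elim: s => [|x s [d [hd d0 h]]].
  by exists 1; split; [exact: dom1 | exact: oner_neq0 |].
have [a [b [ha hb b0 ->]]] := dom_fraction x.
exists (d * b); split; [exact: domM | by rewrite mulf_neq0 |].
case=> [|i] /= hi.
  by rewrite (_ : d * b * (a / b) = d * a); [exact: domM | field].
by rewrite (_ : d * b * _ = b * (d * nth 0 s i)); [apply: domM => //; apply: h | ring].
Qed.

Lemma frac_ideal_gen s : nonzero (gen D s) -> frac_ideal D (gen D s).
Proof.
move=> nz; split => //; first exact: gen_submod.
have [d [hd d0 h]] := common_denominator s.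
exists d; split => // z [c [hc ->]].
rewrite mulr_sumr; apply: dom_sum => i.
by rewrite mulrCA; apply: domM => //; apply: h.
Qed.

Lemma gen_int s : (forall i, (i < size s)%N -> D (nth 0 s i)) -> subset (gen D s) D.
Proof. by apply: gen_min; exact: dom_submod. Qed.

Lemma gen_scale c s : gen D (map (fun y => c * y) s) = scale c (gen D s).
Proof.
have e (f : nat -> K) : \sum_(i < size (map (fun y => c * y) s)) f i * nth 0 (map (fun y => c * y) s) i
         = c * \sum_(i < size s) f i * nth 0 s i.
  by rewrite mulr_sumr size_map; apply: eq_bigr => i _; rewrite (nth_map 0) // mulrCA.
apply: seteq_eq => z; split.
- by case=> f [hf ->]; rewrite e; exists (\sum_(i < size s) f i * nth 0 s i); split => //; exists f.
- by case=> y [[f [hf ->]] ->]; exists f; rewrite e.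
Qed.

Lemma principal_sub_gen a s : List.In a s -> subset (principal D a) (gen D s).
Proof.
move=> ha z [d [hd ->]]; have [_ _ hm] := gen_submod s.
by rewrite mulrC; apply: hm => //; exact: gen_In.
Qed.

Lemma nonzero_gen a s : List.In a s -> a != 0 -> nonzero (gen D s).
Proof. by move=> ha a0; exists a; split => //; exact: gen_In. Qed.

Lemma nonzero_gen_mem s : (exists2 y, y \in s & y != 0) -> nonzero (gen D s).
Proof. by case=> y ys y0; exists y; split => //; exact: gen_mem. Qed.

Lemma gen_nonzero_mem s : nonzero (gen D s) -> exists2 y, y \in s & y != 0.
Proof.
move=> [z [[c [hc ez]] z0]]; apply: NNPP => h; move/negP: z0; apply; apply/eqP.
rewrite ez big1 // => i _; case: (eqVneq (nth 0 s i) 0) => [-> | ne]; first by rewrite mulr0.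
by case: h; exists (nth 0 s i); [exact: mem_nth |].
Qed.

Lemma sum_ideal_submod (A B : K -> Prop) :
  Dsubmodule D A -> Dsubmodule D B -> Dsubmodule D (sum_ideal A B).
Proof.
case=> a0 aadd amul [b0 badd bmul]; split; first by exists 0, 0; rewrite addr0.
- move=> y z [a [b [ha hb ->]]] [a' [b' [ha' hb' ->]]].
  by exists (a + a'), (b + b'); split; [exact: aadd | exact: badd | ring].
- move=> d z hd [a [b [ha hb ->]]]; exists (d * a), (d * b).
  by split; [exact: amul | exact: bmul | rewrite mulrDr].
Qed.

Lemma sum_ideal_int (A B : K -> Prop) : subset A D -> subset B D -> subset (sum_ideal A B) D.
Proof. by move=> hA hB z [a [b [ha hb ->]]]; apply: domD; [apply: hA | apply: hB]. Qed.

Lemma sum_ideall (A B : K -> Prop) : Dsubmodule D B -> subset A (sum_ideal A B).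
Proof. by case=> h0 _ _ z hz; exists z, 0; rewrite addr0. Qed.

Lemma sum_idealr (A B : K -> Prop) : Dsubmodule D A -> subset B (sum_ideal A B).
Proof. by case=> h0 _ _ z hz; exists 0, z; rewrite add0r. Qed.

Lemma frac_ideal_sum (A B : K -> Prop) : Dsubmodule D A -> Dsubmodule D B -> nonzero A ->
  subset A D -> subset B D -> frac_ideal D (sum_ideal A B).
Proof.
move=> hA hB [z [hz z0]] iA iB; apply: frac_ideal_int.
- exact: sum_ideal_submod.
- by exists z; split => //; apply: sum_ideall.
- exact: sum_ideal_int.
Qed.

Definition ideal2 (a b : K) := sum_ideal (principal D a) (principal D b).

Lemma ideal2_gen a b : ideal2 a b = gen D [:: a; b].
Proof.
apply: seteq_eq => z; split.
- case=> y [w [[d [hd ->]] [e [he ->]] ->]].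
  exists (fun i => if i == 0%N then d else e); split; first by move=> i; case: ifP.
  by rewrite !big_ord_recl big_ord0 /= addr0 ![_ * a]mulrC ![_ * b]mulrC.
- case=> f [hf ->]; rewrite !big_ord_recl big_ord0 /= addr0.
  exists (a * f 0%N), (b * f 1%N).
  by split; [exists (f 0%N) | exists (f 1%N) | rewrite ![f _ * _]mulrC].
Qed.

Lemma ideal2_submod a b : Dsubmodule D (ideal2 a b).
Proof. exact: sum_ideal_submod (principal_submod a) (principal_submod b). Qed.

Lemma ideal2l a b : ideal2 a b a.
Proof. by apply: sum_ideall; [exact: principal_submod | exact: principal_self]. Qed.

Lemma ideal2r a b : ideal2 a b b.
Proof. by apply: sum_idealr; [exact: principal_submod | exact: principal_self]. Qed.

Lemma frac_ideal_ideal2 a b : D a -> D b -> a != 0 -> frac_ideal D (ideal2 a b).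
Proof.
move=> ha hb a0; apply: frac_ideal_sum; try exact: principal_submod; try exact: principal_int.
by exists a; split => //; exact: principal_self.
Qed.

Lemma ideal2_int a b : D a -> D b -> subset (ideal2 a b) D.
Proof. by move=> ha hb; apply: sum_ideal_int; apply: principal_int. Qed.

Lemma ideal2_min a b (A : K -> Prop) : Dsubmodule D A -> A a -> A b -> subset (ideal2 a b) A.
Proof.
move=> [h0 hadd hm] ha hb z [y [w [[d [hd ->]] [e [he ->]] ->]]].
by apply: hadd; rewrite mulrC; apply: hm.
Qed.

Lemma scale_ideal2 c a b : scale c (ideal2 a b) = ideal2 (c * a) (c * b).
Proof.
apply: seteq_eq => z; split.
- case=> y [[u [v [[d [hd ->]] [e [he ->]] ->]]] ->].
  by exists (c * a * d), (c * b * e); split; [exists d | exists e | ring].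
- case=> u [v [[d [hd ->]] [e [he ->]] ->]].
  exists (a * d + b * e); split; last by ring.
  by exists (a * d), (b * e); split => //; [exists d | exists e].
Qed.

Lemma mul_principal a b : mul_ideal (principal D a) (principal D b) = principal D (a * b).
Proof.
apply: seteq_eq => z; split.
- case=> s [hs ->]; apply: (submod_sum_In (principal_submod (a * b))) => p hp.
  have [[d [hd ->]] [e [he ->]]] := hs p hp.
  by exists (d * e); split; [exact: domM | ring].
- case=> d [hd ->]; exists [:: (a * d, b)]; split.
    by move=> p [<-|[]]; split; [exists d | exact: principal_self].
  by rewrite big_seq1 /= mulrAC.
Qed.

Lemma prod_principal la :
  prod_ideal D (map (principal D) la) = principal D (\prod_(a <- la) a).
Proof.
elim: la => [|x la IH] /=; first by rewrite big_nil principal1.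
by rewrite IH mul_principal big_cons.
Qed.

Lemma principal_eq_unit x y : x != 0 -> principal D x = principal D y ->
  exists u, [/\ D u, D u^-1 & x = u * y].
Proof.
move=> x0 e.
have [d [hd ex]] : principal D y x by rewrite -e; exact: principal_self.
have [f [hf ey]] : principal D x y by rewrite e; exact: principal_self.
have d0 : d != 0 by apply: contraNneq x0 => d0; rewrite ex d0 mulr0.
have fd : f * d = 1 by apply: (mulfI x0); rewrite mulr1 mulrA -ey -ex.
exists d; split => //; last by rewrite ex mulrC.
by rewrite (_ : d^-1 = f) // -(mulfK d0 f) fd mul1r.
Qed.

Lemma principal_unitM u y : u != 0 -> D u -> D u^-1 -> principal D (u * y) = principal D y.
Proof.
move=> u0 hu hu'; apply: seteq_eq => z; split; case=> c [hc ->].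
  by exists (u * c); split; [exact: domM | rewrite mulrCA mulrA].
by exists (u^-1 * c); split; [exact: domM | rewrite mulrAC mulVKf // mulrC].
Qed.

Lemma ideal2_unitl u b : u != 0 -> D u -> D u^-1 -> D b -> ideal2 u b = D.
Proof.
move=> u0 hu hu' hb; apply: seteq_eq => z; split; first exact: ideal2_int.
move=> hz; exists (u * (u^-1 * z)), 0; split; first by exists (u^-1 * z); split => //; exact: domM.
  by exists 0; rewrite mulr0; split => //; exact: dom0.
by rewrite addr0 mulVKf.
Qed.

Definition coprime_seq (t : seq K) :=
  forall e, D e -> (forall y, y \in t -> divides D e y) -> D e^-1.

Lemma divides_trans a b c : divides D a b -> divides D b c -> divides D a c.
Proof. by move=> [u [hu ->]] [v [hv ->]]; exists (u * v); split; [exact: domM | rewrite mulrA]. Qed.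

Lemma divides0 a : divides D a 0.
Proof. by exists 0; split; [exact: dom0 | rewrite mulr0]. Qed.

Lemma divides_refl a : divides D a a.
Proof. by exists 1; split; [exact: dom1 | rewrite mulr1]. Qed.

Lemma divides_unit e g : g != 0 -> D e -> divides D (g * e) g -> D e^-1.
Proof.
move=> g0 he [c [hc ec]].
have ec1 : e * c = 1 by apply: (mulfI g0); rewrite mulrA -ec mulr1.
have e0 : e != 0 by apply/eqP => e0; move: ec1; rewrite e0 mul0r => /esym/eqP; rewrite oner_eq0.
by rewrite (_ : e^-1 = c) // -(mulKf e0 c) ec1 mulr1.
Qed.

Lemma prime_idealXn Q z n : prime_ideal D Q -> D z -> Q (z ^+ n) -> Q z.
Proof.
case=> _ _ Q1 hQ hz; elim: n => [|n IH]; first by rewrite expr0.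
by rewrite exprS => /hQ [] //; exact: domX.
Qed.

Lemma prime_ideal_prod Q la u : prime_ideal D Q -> D u -> (forall a, List.In a la -> D a) ->
  Q (u * \prod_(a <- la) a) -> Q u \/ exists a, List.In a la /\ Q a.
Proof.
case=> _ _ _ hQ hu; elim: la => [|x la IH] hla; first by rewrite big_nil mulr1; left.
have hx : D x by apply: hla; left.
have hr : D (u * \prod_(a <- la) a) by apply/domM/dom_prod_In => // a ha; apply: hla; right.
rewrite big_cons mulrCA => /(hQ _ _ hx hr) [qx | /IH []]; first by right; exists x; split => //; left.
- by move=> a ha; apply: hla; right.
- by left.
- by case=> a [ha qa]; right; exists a; split => //; right.
Qed.

Lemma prime_ideal_unit Q u : prime_ideal D Q -> u != 0 -> D u^-1 -> ~ Q u.
Proof. by case=> [[_ _ hm] _ Q1 _] u0 hu' qu; apply: Q1; rewrite -(mulVf u0); apply: hm. Qed.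

Lemma prime_ideal_factor Q x la u : prime_ideal D Q -> x != 0 -> D u -> D u^-1 ->
  x = u * \prod_(a <- la) a -> (forall a, List.In a la -> D a) -> Q x ->
  exists a, List.In a la /\ Q a.
Proof.
move=> hQ x0 hu hu' ex hla; rewrite ex => /(prime_ideal_prod hQ hu hla) [Qu | //].
have u0 : u != 0 by apply: contraNneq x0 => u0; rewrite ex u0 mul0r.
by case: (prime_ideal_unit hQ u0 hu' Qu).
Qed.

Section Star.
Variable st : (K -> Prop) -> (K -> Prop).
Hypothesis hst : star_fc D st.

Lemma frac_ideal_st I : frac_ideal D I -> frac_ideal D (st I).
Proof. by case: hst => [[h _] _]; apply: h. Qed.
Lemma st_principal x : x != 0 -> st (principal D x) = principal D x.
Proof. by case: hst => [[_ [h _ _ _ _]] _] x0; apply: seteq_eq; apply: h. Qed.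
Lemma st_scale x I : x != 0 -> frac_ideal D I -> st (scale x I) = scale x (st I).
Proof. by case: hst => [[_ [_ h _ _ _]] _] x0 hI; apply: seteq_eq; apply: h. Qed.
Lemma st_ext I : frac_ideal D I -> subset I (st I).
Proof. by case: hst => [[_ [_ _ h _ _]] _]; apply: h. Qed.
Lemma st_mono I J : frac_ideal D I -> frac_ideal D J -> subset I J -> subset (st I) (st J).
Proof. by case: hst => [[_ [_ _ _ h _]] _]; apply: h. Qed.
Lemma st_idem I : frac_ideal D I -> st (st I) = st I.
Proof. by case: hst => [[_ [_ _ _ _ h]] _] hI; apply: seteq_eq; apply: h. Qed.
Lemma st_finite I z : frac_ideal D I ->
  st I z <-> exists J, [/\ fin_gen D J, nonzero J, subset J I & st J z].
Proof. by case: hst => _ h hI; apply: h. Qed.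

Lemma st_dom : st D = D.
Proof. by rewrite -principal1 st_principal // oner_neq0. Qed.

Lemma st_int I : frac_ideal D I -> subset I D -> subset (st I) D.
Proof. by move=> hI iI; rewrite -st_dom; apply: st_mono => //; exact: frac_ideal_dom. Qed.

Lemma st_least I J : frac_ideal D I -> frac_ideal D J -> st J = J -> subset I J ->
  subset (st I) J.
Proof. by move=> hI hJ e s; rewrite -e; apply: st_mono. Qed.

Lemma st_eq_dom I : frac_ideal D I -> subset I D -> st I 1 -> st I = D.
Proof.
move=> hI iI h1; apply: seteq_eq => z; split; first exact: st_int.
have [[_ _ hm] _ _] := frac_ideal_st hI.
by move=> hz; rewrite -(mulr1 z); apply: hm.
Qed.

Lemma star_ideal_st I : frac_ideal D I -> star_ideal D st (st I).
Proof. by move=> hI; split; [exact: frac_ideal_st | rewrite st_idem]. Qed.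

Lemma finite_type_st_gen s : nonzero (gen D s) -> finite_type D st (st (gen D s)).
Proof.
move=> nz; split; first exact/star_ideal_st/frac_ideal_gen.
by exists (gen D s); split => //; exists s.
Qed.

Lemma finite_type_st_ideal2 a b : D a -> D b -> a != 0 -> finite_type D st (st (ideal2 a b)).
Proof.
by move=> ha hb a0; rewrite ideal2_gen; apply/finite_type_st_gen/(nonzero_gen (a := a)) => //; left.
Qed.

Lemma finite_type_principal J : finite_type D st J -> is_principal D J -> exists a, J = principal D a.
Proof. by move=> _ [x hx]; exists x; apply: seteq_eq. Qed.

Section MaxStar.
Variable P : K -> Prop.
Hypothesis hP : max_star D st P.

Lemma max_frac : frac_ideal D P. Proof. by case: hP => [[[h _] _ _] _]. Qed.
Lemma max_st : st P = P. Proof. by case: hP => [[[_ h] _ _] _]; apply: seteq_eq. Qed.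
Lemma max_int : subset P D. Proof. by case: hP => [[_ h _] _]. Qed.
Lemma max_proper : ~ P 1. Proof. by case: hP => [[_ _ h] _]. Qed.
Lemma max_submod : Dsubmodule D P. Proof. by case: max_frac. Qed.
Lemma max0 : P 0. Proof. by case: max_submod. Qed.
Lemma maxD y z : P y -> P z -> P (y + z). Proof. by case: max_submod => _ h _; apply: h. Qed.
Lemma maxMl d z : D d -> P z -> P (d * z). Proof. by case: max_submod => _ _; apply. Qed.
Lemma maxMr d z : D d -> P z -> P (z * d). Proof. by rewrite mulrC; apply: maxMl. Qed.

Lemma max_st_least I : frac_ideal D I -> subset I P -> subset (st I) P.
Proof. by move=> hI; apply: st_least => //; [exact: max_frac | exact: max_st]. Qed.

Lemma frac_ideal_max_add a : D a -> frac_ideal D (sum_ideal P (principal D a)).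
Proof.
move=> ha; apply: frac_ideal_sum; [exact: max_submod | exact: principal_submod | | exact: max_int | exact: principal_int].
by case: max_frac.
Qed.

Lemma max_add_st1 a : D a -> ~ P a -> st (sum_ideal P (principal D a)) 1.
Proof.
move=> ha na; apply: NNPP => n1; apply: na.
have fS := frac_ideal_max_add ha.
have pT : pint_star D st (st (sum_ideal P (principal D a))).
  by split => //; [exact: star_ideal_st | exact/st_int/sum_ideal_int/principal_int/ha/max_int].
have sPT : subset P (st (sum_ideal P (principal D a))).
  by move=> z hz; apply/st_ext/sum_ideall => //; exact: principal_submod.
case: hP => _ hmax; apply: (hmax _ pT sPT); apply: st_ext => //.
by apply: sum_idealr; [exact: max_submod | exact: principal_self].
Qed.

(* b lies in b (P + aD)^* = (bP + abD)^*, which is contained in P once ab is. *)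
Lemma max_prime a b : D a -> D b -> P (a * b) -> P a \/ P b.
Proof.
move=> ha hb hab; case: (classic (P a)) => pa; [by left | right].
case: (eqVneq b 0) => [-> | b0]; first exact: max0.
have fS := frac_ideal_max_add ha.
have : scale b (st (sum_ideal P (principal D a))) b by exists 1; rewrite mulr1; split => //; exact: max_add_st1.
rewrite -st_scale //; apply: max_st_least; first exact: frac_ideal_scale.
move=> z [y [[p [w [hp [d [hd ->]] ->]]] ->]].
rewrite mulrDr; apply: maxD; first exact: maxMl.
by rewrite (_ : b * (a * d) = d * (a * b)); [exact: maxMl | ring].
Qed.

Lemma max_prime_ideal : prime_ideal D P.
Proof. by split; [exact: max_submod | exact: max_int | exact: max_proper | exact: max_prime]. Qed.

Lemma max_notM s t : D s -> D t -> ~ P s -> ~ P t -> ~ P (s * t).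
Proof. by move=> hs ht ns nt /max_prime []. Qed.

Lemma max_neq0 s : ~ P s -> s != 0.
Proof. by apply: contra_not_neq => ->; exact: max0. Qed.

Lemma max_not_coprime a b : D a -> D b -> a != 0 -> st (ideal2 a b) = D -> P a -> P b -> False.
Proof.
move=> ha hb a0 e pa pb; apply: max_proper.
have : st (ideal2 a b) 1 by rewrite e; exact: dom1.
apply: max_st_least; first exact: frac_ideal_ideal2.
by apply: ideal2_min => //; exact: max_submod.
Qed.

Notation V := (loc D P).

Lemma loc_dom z : D z -> V z.
Proof.
move=> hz; exists z, 1.
by split; [| exact: dom1 | exact: max_proper | rewrite invr1 mulr1].
Qed.

Lemma loc1 : V 1. Proof. exact/loc_dom/dom1. Qed.

Lemma loc_div a s : D a -> D s -> ~ P s -> V (a / s).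
Proof. by move=> ha hs ns; exists a, s. Qed.

Lemma locV s : D s -> ~ P s -> V s^-1.
Proof. by move=> hs ns; rewrite -(mul1r s^-1); apply: loc_div => //; exact: dom1. Qed.

Lemma locM y z : V y -> V z -> V (y * z).
Proof.
move=> [a [s [ha hs ns ->]]] [b [t [hb ht nt ->]]].
exists (a * b), (s * t); split; [exact: domM | exact: domM | exact: max_notM |].
by field; rewrite (max_neq0 ns) (max_neq0 nt).
Qed.

Lemma locD y z : V y -> V z -> V (y + z).
Proof.
move=> [a [s [ha hs ns ->]]] [b [t [hb ht nt ->]]].
exists (a * t + b * s), (s * t).
split; [by apply: domD; apply: domM | exact: domM | exact: max_notM |].
by field; rewrite (max_neq0 ns) (max_neq0 nt).
Qed.

Lemma locXn y n : V y -> V (y ^+ n).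
Proof. by move=> hy; elim: n => [|n IH]; rewrite ?expr0 ?exprS; [exact: loc1 | exact: locM]. Qed.

(* z s = a x with s outside P, and P is prime. *)
Lemma max_of_loc_div z x : D z -> P x -> x != 0 -> V (z / x) -> P z.
Proof.
move=> hz px x0 [a [s [ha hs ns e]]].
have hzs : z * s = a * x.
  apply: (mulIf (invr_neq0 x0)).
  by rewrite mulrAC e mulrAC !mulfK // (max_neq0 ns).
have : P (z * s) by rewrite hzs; apply: maxMl.
by case/max_prime.
Qed.

End MaxStar.

Section LocRadical.
Variables (P : K -> Prop) (x : K).
Hypotheses (hP : max_star D st P) (hval : valuation (loc D P)) (Px : P x) (x0 : x != 0).

Definition loc_radical z := D z /\ exists n, loc D P (z ^+ n / x).

Lemma loc_radicalD_aux a b n : a != 0 -> loc D P (b / a) ->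
  loc D P (a ^+ n / x) -> loc D P ((a + b) ^+ n / x).
Proof.
move=> a0 hba han; rewrite (_ : a + b = a * (1 + b / a)); last by field.
by rewrite exprMn mulrAC; apply: (locM hP) => //; apply/(locXn hP)/(locD hP) => //; exact: loc1.
Qed.

Lemma loc_radicalM_aux a b n : a != 0 -> loc D P (b / a) ->
  loc D P ((a * b) ^+ n / x) -> loc D P (b ^+ (n + n) / x).
Proof.
move=> a0 hba habn.
rewrite (_ : b ^+ (n + n) / x = (a * b) ^+ n / x * (b / a) ^+ n); last first.
  by rewrite exprD exprMn expr_div_n; field; rewrite expf_neq0.
by apply: (locM hP) => //; exact: locXn.
Qed.

Lemma loc_radical_prime : prime_ideal D loc_radical.
Proof.
have r0 : loc_radical 0.
  by split; [exact: dom0 | exists 1%N; rewrite expr1 mul0r; apply/(loc_dom hP)/dom0].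
split; last 1 first.
- move=> a b ha hb [_ [n hn]].
  case: (eqVneq a 0) => [-> | a0]; first by left.
  case: (eqVneq b 0) => [-> | b0]; first by right.
  case: (hval (mulf_neq0 b0 (invr_neq0 a0))) => hw; first by right; split => //; exists (n + n)%N; exact: (loc_radicalM_aux a0).
  by left; split => //; exists (n + n)%N; rewrite invf_div in hw; rewrite [a * b]mulrC in hn; exact: (loc_radicalM_aux b0).
- split => //.
  + move=> a b [ha [n hn]] [hb [m hm]]; split; first exact: domD.
    case: (eqVneq a 0) => [-> | a0]; first by rewrite add0r; exists m.
    case: (eqVneq b 0) => [-> | b0]; first by rewrite addr0; exists n.
    case: (hval (mulf_neq0 b0 (invr_neq0 a0))) => hw; first by exists n; exact: (loc_radicalD_aux a0).
    by exists m; rewrite addrC; apply: (loc_radicalD_aux b0); rewrite // -invf_div.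
  + move=> d z hd [hz [n hn]]; split; first exact: domM.
    by exists n; rewrite exprMn -mulrA; apply: (locM hP) => //; apply/(loc_dom hP)/domX.
- by move=> z [].
- move=> [_ [n hn]]; apply: (max_proper hP).
  by apply: (max_of_loc_div hP dom1 Px x0); rewrite -(expr1n _ n).
Qed.

Lemma loc_radical_sub : subset loc_radical P.
Proof.
move=> z [hz [n hn]]; apply: (prime_idealXn (max_prime_ideal hP) hz (n := n)).
exact: (max_of_loc_div hP (domX _ hz) Px x0 hn).
Qed.

(* loc_radical is a nonzero prime inside P, so height one forces it to be P. *)
Lemma height_one_loc_power y : height_one D P -> P y -> exists n, loc D P (y ^+ n / x).
Proof.
case=> _ _ h Py; have nz : nonzero loc_radical.
  by exists x; split => //; split; [exact: (max_int hP) | exists 1%N; rewrite expr1 mulfV //; exact: (loc1 hP)].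
by have [_ [n hn]] := (h _ loc_radical_prime nz loc_radical_sub y).2 Py; exists n.
Qed.

End LocRadical.

Lemma chain_bound_seq (F : (K -> Prop) -> Prop) X0 (s : seq K) :
  F X0 -> (forall X Y, F X -> F Y -> subset X Y \/ subset Y X) ->
  (forall y, y \in s -> exists2 X, F X & X y) ->
  exists2 X, F X & forall y, y \in s -> X y.
Proof.
move=> FX0 htot; elim: s => [|y s IH] hs; first by exists X0.
have [X FX hX] := IH (fun w hw => hs w (mem_behead (hw : w \in behead (y :: s)))).
have [Y FY Yy] := hs y (mem_head _ _).
case: (htot X Y FX FY) => sXY.
- by exists Y => // w; rewrite inE => /predU1P [-> // | /hX /sXY].
- by exists X => // w; rewrite inE => /predU1P [-> | /hX //]; exact: sXY.
Qed.

Lemma chain_union_pint (F : (K -> Prop) -> Prop) X0 z0 :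
  F X0 -> X0 z0 -> (forall X Y, F X -> F Y -> subset X Y \/ subset Y X) ->
  (forall X z, F X -> X z -> pint_star D st X) ->
  pint_star D st (fun z => exists2 X, F X & X z).
Proof.
move=> FX0 X0z0 htot hF; set U := (fun z => _).
have bound (s : seq K) : (forall y, y \in s -> U y) -> exists2 X, F X & forall y, y \in s -> X y.
  exact: chain_bound_seq FX0 htot.
have [[fX0 _] _ _] := hF X0 z0 FX0 X0z0.
have [[X00 _ _] _ _] := fX0.
have Usub : Dsubmodule D U.
  split; first by exists X0.
  - move=> y z hy hz; have [|X FX hX] := bound [:: y; z].
      by move=> w; rewrite !inE => /orP [] /eqP ->.
    have Xy : X y by apply: hX; exact: mem_head.
    have [[[[_ hadd _] _ _] _] _ _] := hF X y FX Xy.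
    by exists X => //; apply: hadd; apply: hX; rewrite !inE eqxx ?orbT.
  - move=> d z hd [X FX Xz]; have [[[[_ _ hm] _ _] _] _ _] := hF X z FX Xz.
    by exists X => //; apply: hm.
have iU : subset U D by move=> z [X FX Xz]; have [_ h _] := hF X z FX Xz; exact: h.
have fU : frac_ideal D U.
  by apply: frac_ideal_int => //; case: fX0 => _ [w [hw w0]] _; exists w; split => //; exists X0.
split => //; last by move=> [X FX X1]; have [_ _] := hF X 1 FX X1; exact.
split => // z; split; last exact: st_ext.
move/((st_finite z fU).1) => [J [[s /seteq_eq eJ] nzJ sJ stJ]]; subst J.
have [X FX hX] := bound s (fun y hy => sJ y (gen_mem hy)).
have [y ys y0] := gen_nonzero_mem nzJ.
have [[fX sX] _ _] := hF X y FX (hX y ys).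
exists X => //; apply/(sX z).1; apply: (st_mono (frac_ideal_gen nzJ) fX) stJ.
by apply: gen_min => [|i hi]; [case: fX | apply/hX/mem_nth].
Qed.

Lemma max_star_exists I : pint_star D st I -> exists P, max_star D st P /\ subset I P.
Proof.
move=> pI; have [[fI _] _ _] := pI.
(* The empty set is admitted so that the union of the empty chain qualifies. *)
pose Pf (X : K -> Prop) := (forall z, ~ X z) \/ (pint_star D st X /\ subset I X).
have [|A [PA hmax]] := @classical_sets.Zorn_bigcup K Pf.
  move=> F hF htot.
  case: (classic (exists X0, F X0 /\ exists z, X0 z)) => [[X0 [FX0 [z0 X0z0]]] | hno]; last first.
    by left => z [X FX Xz]; apply: hno; exists X; split => //; exists z.
  have memF X z : F X -> X z -> pint_star D st X /\ subset I X.
    by move=> FX Xz; case: (hF X FX) => // h; case: (h z Xz).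
  right; split; last by move=> z /(memF _ _ FX0 X0z0).2; exists X0.
  apply: (chain_union_pint FX0 X0z0) => [X Y FX FY | X z FX Xz]; first exact: htot.
  exact: (memF X z FX Xz).1.
have maximal Q : Pf Q -> subset A Q -> subset Q A.
  by move=> PQ sAQ; apply: NNPP => nQA; apply: (hmax Q).
have PfI : Pf I by right; split.
case: PA => [hA | [pA IA]].
  case: fI => _ [z [Iz _]] _.
  by case: (hA z); apply: (maximal I PfI) => // y /hA.
exists A; split => //; split => // Q pQ sAQ.
by apply: maximal => //; right; split => // z /IA /sAQ.
Qed.

Lemma max_star_of_nonunit b : D b -> b != 0 -> ~ D b^-1 -> exists M, max_star D st M /\ M b.
Proof.
move=> hb b0 nbi; have fb := frac_ideal_principal b0.
have [|M [hM sM]] := max_star_exists (I := principal D b); last by exists M; split => //; exact/sM/principal_self.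
split; [by split => //; rewrite st_principal | exact: principal_int |].
by case=> d [hd /esym e]; apply: nbi; rewrite (_ : b^-1 = d) //; apply: (mulfI b0); rewrite e mulfV.
Qed.

Lemma fhomog_principal I : fhomog D st I -> exists a, I = principal D a.
Proof. by case=> [[_ hft _] h]; exact: finite_type_principal (h I hft (fun z hz => hz)). Qed.

Definition fhomog1_elt a := [/\ D a, a != 0 & fhomog_type1 D st (principal D a)].

Lemma principal_fhomog1_elt a : fhomog_type1 D st (principal D a) -> fhomog1_elt a.
Proof.
move=> h; have [[[[[fr _] iI _] _ _] _] _] := h.
split => //; first exact/iI/principal_self.
by case: fr => _ [z [[d [hd ->]] z0]] _; apply: contraNneq z0 => ->; rewrite mul0r.
Qed.

Lemma pint_st_gen P s : max_star D st P -> nonzero (gen D s) -> subset (gen D s) P ->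
  pint_star D st (st (gen D s)).
Proof.
move=> hP nz sP; have h := max_st_least hP (frac_ideal_gen nz) sP.
split; first exact/star_ideal_st/frac_ideal_gen.
- by move=> z /h; apply: max_int.
- by move=> /h; apply: max_proper.
Qed.

(* A finite-character witness of (M + pD)^* = D is split into a part inside M and a part inside N. *)
Lemma max_separation M N p a : max_star D st M -> max_star D st N -> N p -> ~ M p ->
  M a -> N a -> a != 0 ->
  exists s t, [/\ subset (gen D s) M, subset (gen D t) N, List.In a s, List.In a t &
    st (sum_ideal (st (gen D s)) (st (gen D t))) = D].
Proof.
move=> hM hN Np nMp Ma Na a0; have Dp := max_int hN Np.
have [J [[r /seteq_eq eJ] nzJ sJ stJ]] :=
  (st_finite 1 (frac_ideal_max_add hM Dp)).1 (max_add_st1 hM Dp nMp); subst J.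
have [ms [hsz hms]] : exists ms : seq K, size ms = size r /\ forall i, (i < size r)%N ->
    M (nth 0 ms i) /\ principal D p (nth 0 r i - nth 0 ms i).
  apply: (@nth_choice K K 0 0 r (fun x m => M m /\ principal D p (x - m))) => i hi; have [m [w [hm hw ->]]] := sJ _ (gen_nth hi).
  by exists m; rewrite addrAC subrr add0r.
have nzs : nonzero (gen D (a :: ms)) by apply: (nonzero_gen (a := a)) => //; left.
have nzt : nonzero (gen D [:: a; p]) by apply: (nonzero_gen (a := a)) => //; left.
have fs := frac_ideal_gen nzs; have ft := frac_ideal_gen nzt.
have sM : subset (gen D (a :: ms)) M.
  apply: gen_min (max_submod hM) _ => -[|i] //= hi.
  by rewrite -hsz in hms; have [] := hms i hi.
have tN : subset (gen D [:: a; p]) N by apply: gen_min (max_submod hN) _ => -[|[|i]].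
have [sA nzA _] := frac_ideal_st fs; have [sB _ _] := frac_ideal_st ft.
have iA : subset (st (gen D (a :: ms))) D by move=> z /(max_st_least hM fs sM); exact: max_int.
have iB : subset (st (gen D [:: a; p])) D by move=> z /(max_st_least hN ft tN); exact: max_int.
have fAB := frac_ideal_sum sA sB nzA iA iB.
exists (a :: ms), [:: a; p]; split => //; try by left.
apply: (st_eq_dom fAB (sum_ideal_int iA iB)).
apply: (st_mono (frac_ideal_gen nzJ) fAB) stJ.
apply: gen_min (sum_ideal_submod sA sB) _ => i hi.
exists (nth 0 ms i), (nth 0 r i - nth 0 ms i); split; last by rewrite addrC subrK.
  by apply: st_ext fs _ _; apply: (gen_nth (i := i.+1)) => /=; rewrite hsz.
have [_ [d [hd ->]]] := hms i hi.
by apply: st_ext ft _ _; apply: (principal_sub_gen (a := p)); [right; left | exists d].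
Qed.

Lemma fhomog1_elt_max_unique a M N : fhomog1_elt a -> max_star D st M -> max_star D st N ->
  M a -> N a -> M = N.
Proof.
move=> [ha a0 [[[_ _ hhom] _] _]] hM hN Ma Na.
suff sNM : subset N M by apply: seteq_eq => z; split; [exact: hN.2 M hM.1 sNM z | exact: sNM].
move=> p Np; apply: NNPP => nMp.
have [s [t [sM tN sa ta e]]] := max_separation hM hN Np nMp Ma Na a0.
have nzs := nonzero_gen sa a0; have nzt := nonzero_gen ta a0.
apply: (hhom (st (gen D s)) (st (gen D t))); last by rewrite e.
- exact: pint_st_gen hM nzs sM.
- exact: finite_type_st_gen.
- exact: pint_st_gen hN nzt tN.
- exact: finite_type_st_gen.
- by move=> z /(principal_sub_gen sa); apply: st_ext; exact: frac_ideal_gen.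
- by move=> z /(principal_sub_gen ta); apply: st_ext; exact: frac_ideal_gen.
Qed.

Lemma st_ideal2_principal_split a b g : D a -> D b -> a != 0 ->
  st (ideal2 a b) = principal D g ->
  exists a' b', [/\ g != 0, a = g * a', b = g * b', D a' & D b'] /\ st (ideal2 a' b') = D.
Proof.
move=> ha hb a0 eg; have fab := frac_ideal_ideal2 ha hb a0.
have [a' [ha' ea]] : principal D g a by rewrite -eg; apply/st_ext/ideal2l.
have [b' [hb' eb]] : principal D g b by rewrite -eg; apply/st_ext/ideal2r.
have g0 : g != 0 by apply: contraNneq a0 => g0; rewrite ea g0 mul0r.
have a'0 : a' != 0 by apply: contraNneq a0 => e; rewrite ea e mulr0.
exists a', b'; split => //; apply: (scale_inj g0).
rewrite -(st_scale g0 (frac_ideal_ideal2 ha' hb' a'0)) scale_ideal2 -ea -eb eg.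
by rewrite -[in RHS]principal1 scale_principal mulr1.
Qed.

(* The ideal analogue of Gauss' lemma. *)
Lemma st_ideal2_coprimeMl a b c : D a -> D b -> D c -> a != 0 -> c != 0 ->
  st (ideal2 a b) = D -> st (ideal2 (a * c) b) = st (ideal2 c b).
Proof.
move=> ha hb hc a0 c0 cop.
have fT := frac_ideal_ideal2 (domM ha hc) hb (mulf_neq0 a0 c0).
have fcb := frac_ideal_ideal2 hc hb c0.
have [_ _ hmT] := ideal2_submod (a * c) b; have [_ _ hmcb] := ideal2_submod c b.
apply: seteq_eq => z; split.
  apply: (st_mono fT fcb); apply: ideal2_min (ideal2_submod c b) _ (ideal2r c b).
  exact/hmcb/ideal2l.
have fsT := frac_ideal_st fT; have [sT _ _] := fsT.
apply: (st_least fcb fsT (st_idem fT)); apply: ideal2_min sT _ (st_ext fT (ideal2r _ _)).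
have : scale c (st (ideal2 a b)) c by exists 1; rewrite mulr1 cop; split => //; exact: dom1.
rewrite -(st_scale c0 (frac_ideal_ideal2 ha hb a0)) scale_ideal2.
apply: st_mono; first exact: frac_ideal_ideal2 (domM hc ha) (domM hc hb) (mulf_neq0 c0 a0).
  exact: fT.
apply: ideal2_min (ideal2_submod _ _) _ _; first by rewrite mulrC; exact: ideal2l.
exact/hmT/ideal2r.
Qed.

Lemma st_ideal2_fhomog1_eltM a c : fhomog1_elt a -> D c -> c != 0 ->
  (forall b, D b -> exists h, st (ideal2 c b) = principal D h) ->
  forall b, D b -> exists g, st (ideal2 (a * c) b) = principal D g.
Proof.
move=> [ha a0 [[_ hpr] _]] hc c0 IH b hb.
have fab := frac_ideal_ideal2 ha hb a0; have ftab := finite_type_st_ideal2 ha hb a0.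
have [g eg] := finite_type_principal ftab
  (hpr _ ftab (fun z hz => st_ext fab (sum_ideall (principal_submod b) hz))).
have [a' [b' [[g0 ea eb ha' hb'] cop]]] := st_ideal2_principal_split ha hb a0 eg.
have a'0 : a' != 0 by apply: contraNneq a0 => e; rewrite ea e mulr0.
have [h eh] := IH b' hb'; exists (g * h).
rewrite ea eb -mulrA -scale_ideal2.
rewrite (st_scale g0 (frac_ideal_ideal2 (domM ha' hc) hb' (mulf_neq0 a'0 c0))).
by rewrite st_ideal2_coprimeMl // eh scale_principal.
Qed.

Lemma st_ideal2_principal_prod la u b : (forall a, List.In a la -> fhomog1_elt a) ->
  u != 0 -> D u -> D u^-1 -> D b ->
  exists g, st (ideal2 (u * \prod_(a <- la) a) b) = principal D g.
Proof.
elim: la u b => [|a la IH] u b hg u0 hu hu' hb.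
  by exists 1; rewrite big_nil mulr1 ideal2_unitl // st_dom principal1.
have hg' y : List.In y la -> fhomog1_elt y by move=> hy; apply: hg; right.
have hp : D (\prod_(y <- la) y) by apply: dom_prod_In => y /hg' [].
rewrite big_cons mulrCA; apply: st_ideal2_fhomog1_eltM => //; first by apply: hg; left.
- exact: domM.
- by rewrite mulf_neq0 //; apply: prodf_In_neq0 => y /hg' [].
- by move=> b' hb'; apply: IH.
Qed.

Section Cond1.
Hypothesis c1 : cond1 D st.

Lemma cond1_factor x : D x -> x != 0 -> exists la u,
  [/\ D u, D u^-1, x = u * \prod_(a <- la) a & forall a, List.In a la -> fhomog1_elt a].
Proof.
move=> hx x0; case: (classic (D x^-1)) => hxi.
  by exists [::], x; rewrite big_nil mulr1; split.
have [l [hl /seteq_eq e]] := c1 hx x0 hxi.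
have [la ela] : exists la, l = map (principal D) la.
  by apply: In_map_choice => I /hl [/fhomog_principal].
have hg a : List.In a la -> fhomog1_elt a.
  by move=> ha; apply/principal_fhomog1_elt/hl; rewrite ela; exact: List.in_map.
have p0 : \prod_(a <- la) a != 0 by apply: prodf_In_neq0 => a /hg [].
rewrite ela prod_principal st_principal // in e.
by have [u [hu hu' ex]] := principal_eq_unit x0 e; exists la, u.
Qed.

Lemma cond1_st_ideal2_principal a b : D a -> a != 0 -> D b ->
  exists g, st (ideal2 a b) = principal D g.
Proof.
move=> ha a0 hb; have [la [u [hu hu' ea hg]]] := cond1_factor ha a0.
rewrite ea; apply: st_ideal2_principal_prod => //.
by apply: contraNneq a0 => u0; rewrite ea u0 mul0r.
Qed.

Lemma cond1_coprime_fraction z : z != 0 -> exists a b,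
  [/\ D a, D b, a != 0, b != 0 & z = a / b] /\ st (ideal2 a b) = D.
Proof.
move=> z0; have [a [b [ha hb b0 ez]]] := dom_fraction z.
have a0 : a != 0 by apply: contraNneq z0 => a0; rewrite ez a0 mul0r.
have [g eg] := cond1_st_ideal2_principal ha a0 hb.
have [a' [b' [[g0 ea eb ha' hb'] cop]]] := st_ideal2_principal_split ha hb a0 eg.
exists a', b'; split => //; split => //.
- by apply: contraNneq a0 => e; rewrite ea e mulr0.
- by apply: contraNneq b0 => e; rewrite eb e mulr0.
- by rewrite ez ea eb -mulf_div divff // mul1r.
Qed.

Lemma cond1_valuation P : max_star D st P -> valuation (loc D P).
Proof.
move=> hP z z0; have [a [b [[ha hb a0 b0 ->] cop]]] := cond1_coprime_fraction z0.
case: (classic (P b)) => pb; last by left; exact: loc_div.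
right; rewrite invf_div; apply: loc_div => // pa.
exact: (max_not_coprime hP ha hb a0 cop pa pb).
Qed.

Lemma cond1_int_loc z : D z <-> (forall P, max_star D st P -> loc D P z).
Proof.
split=> [hz P hP | h]; first exact: loc_dom.
case: (eqVneq z 0) => [-> | z0]; first exact: dom0.
have [a [b [[ha hb a0 b0 ez] cop]]] := cond1_coprime_fraction z0.
case: (classic (D b^-1)) => hbi; first by rewrite ez; exact: domM.
have [M [hM Mb]] := max_star_of_nonunit hb b0 hbi.
have Ma : M a by apply: (max_of_loc_div hM ha Mb b0); rewrite -ez; exact: h.
by case: (max_not_coprime hM ha hb a0 cop Ma Mb).
Qed.

Lemma fhomog1_elt_max a : fhomog1_elt a -> exists M, max_star D st M /\ M a.
Proof. by case=> _ _ [_ [_ [M [hM sM _]]]]; exists M; split => //; exact/sM/principal_self. Qed.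

Lemma cond1_locally_finite x : D x -> x != 0 -> exists l : seq (K -> Prop),
  forall P, max_star D st P -> P x -> exists Q, List.In Q l /\ seteq P Q.
Proof.
move=> hx x0; have [la [u [hu hu' ex hg]]] := cond1_factor hx x0.
have [lM hlM] := forall2_choice (fun a ha => fhomog1_elt_max (hg a ha)).
have hla a : List.In a la -> D a by move/hg => [].
exists lM => P hP Px.
have [a [ha Pa]] := prime_ideal_factor (max_prime_ideal hP) x0 hu hu' ex hla Px.
have [M [hM [hMa Ma]]] := forall2_In_l hlM ha.
by exists M; split => //; rewrite (fhomog1_elt_max_unique (hg a ha) hP hMa Pa Ma).
Qed.

Lemma cond1_prime_fhomog1_elt Q : prime_ideal D Q -> nonzero Q -> exists a, fhomog1_elt a /\ Q a.
Proof.
move=> hQ [q [Qq q0]]; have [_ qi _ _] := hQ.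
have [la [u [hu hu' eq hg]]] := cond1_factor (qi q Qq) q0.
have hla a : List.In a la -> D a by move/hg => [].
have [a [ha Qa]] := prime_ideal_factor hQ q0 hu hu' eq hla Qq.
by exists a; split => //; apply: hg.
Qed.

(* A nonzero prime Q inside P contains an f-homog element a, whose maximal *-ideal is P; the
   type 1 condition puts a power of every z in P into aD, hence into Q. *)
Lemma cond1_height_one P : max_star D st P -> height_one D P.
Proof.
move=> hP; split; [exact: max_prime_ideal | by case: (max_frac hP) |].
move=> Q hQ nzQ sQP z; split; first exact: sQP.
have [a [ga Qa]] := cond1_prime_fhomog1_elt hQ nzQ.
have [ha a0 [_ [_ [M [hM sM ht]]]]] := ga.
have eM := fhomog1_elt_max_unique ga hP hM (sQP _ Qa) (sM _ (principal_self a)); subst M.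
move=> Pz; case: (eqVneq z 0) => [-> | z0]; first by case: hQ => -[].
have hz := max_int hP Pz.
have [n [_ hn]] := ht z Pz z0.
have [d [hd ezn]] : principal D a (z ^+ n).
  by apply: hn; [exists 1; split; [exact: loc1 | rewrite mulr1] | exact: domX].
apply: (prime_idealXn hQ hz (n := n)); rewrite ezn mulrC.
by case: hQ => -[_ _ hm] _ _ _; apply: hm.
Qed.

Lemma cond1_gcd_domain : gcd_domain D.
Proof.
move=> a b ha hb a0 b0; have [g eg] := cond1_st_ideal2_principal ha a0 hb.
have fab := frac_ideal_ideal2 ha hb a0.
have st_ideal2_mem y : st (ideal2 a b) y -> divides D g y by rewrite eg => -[c []]; exists c.
exists g; split.
- by apply: (st_int fab (ideal2_int ha hb)); rewrite eg; exact: principal_self.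
- exact/st_ideal2_mem/st_ext/ideal2l.
- exact/st_ideal2_mem/st_ext/ideal2r.
- move=> e he [c [hc ea]] [c' [hc' eb]].
  have e0 : e != 0 by apply: contraNneq a0 => e0; rewrite ea e0 mul0r.
  have : st (ideal2 a b) g by rewrite eg; exact: principal_self.
  move/(st_least fab (frac_ideal_principal e0) (st_principal e0)); apply.
  by apply: ideal2_min (principal_submod e) _ _; [exists c | exists c'].
Qed.

Lemma cond1_cond2 : cond2 D st.
Proof.
split; first exact: cond1_gcd_domain.
split; last exact: cond1_height_one.
split; [exact: cond1_valuation | exact: cond1_int_loc | exact: cond1_locally_finite |].
move=> P1 P2 h1 h2 ne [Q [hQ nzQ s1 s2]].
have [a [ga Qa]] := cond1_prime_fhomog1_elt hQ nzQ.
by apply: ne; rewrite (fhomog1_elt_max_unique ga h1 h2 (s1 _ Qa) (s2 _ Qa)).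
Qed.


End Cond1.
Section Cond2.
Hypotheses (hgcd : gcd_domain D) (hirkt : star_IRKT D st).
Hypothesis hht : forall P, max_star D st P -> height_one D P.

Lemma cond2_valuation P : max_star D st P -> valuation (loc D P).
Proof. by case: hirkt => h _ _ _; apply: h. Qed.

Lemma cond2_int_loc z : D z <-> (forall P, max_star D st P -> loc D P z).
Proof. by case: hirkt => _ h _ _; apply: h. Qed.

Lemma cond2_loc_power P x y : max_star D st P -> P x -> x != 0 -> P y ->
  exists n, loc D P (y ^+ n / x).
Proof. by move=> hP Px x0; apply: height_one_loc_power (cond2_valuation hP) Px x0 _ (hht hP). Qed.

Lemma gcd_seq (s : seq K) : (forall y, y \in s -> D y) -> (exists2 y, y \in s & y != 0) ->
  exists g, [/\ D g, g != 0, forall y, y \in s -> divides D g y &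
    forall e, D e -> (forall y, y \in s -> divides D e y) -> divides D e g].
Proof.
elim: s => [|x s IH] hs hnz; first by case: hnz.
have hx : D x by apply/hs/mem_head.
have hs' y : y \in s -> D y by move=> hy; apply: hs; rewrite inE hy orbT.
case: (classic (exists2 y, y \in s & y != 0)) => hnz'; last first.
  have s0 y : y \in s -> y = 0 by move=> hy; apply: NNPP => /eqP ny; apply: hnz'; exists y.
  have x0 : x != 0 by case: hnz => y; rewrite inE => /predU1P [-> // | /s0 ->]; rewrite eqxx.
  exists x; split => //; last by move=> e he; apply; exact: mem_head.
  by move=> y; rewrite inE => /predU1P [-> | /s0 ->]; [exact: divides_refl | exact: divides0].
have [g [hg g0 hdiv huniv]] := IH hs' hnz'.
have huniv' e : D e -> (forall y, y \in x :: s -> divides D e y) ->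
    divides D e g /\ divides D e x.
  by move=> he hde; split; [apply: huniv => // y hy; apply: hde; rewrite inE hy orbT | apply/hde/mem_head].
case: (eqVneq x 0) => [x0 | x0].
  exists g; split => //; last by move=> e he /(huniv' e he) [].
  by move=> y; rewrite inE => /predU1P [-> | /hdiv //]; rewrite x0; exact: divides0.
have [d [hd hdx hdg hdu]] := hgcd hx hg x0 g0.
exists d; split => //.
- by apply: contraNneq x0 => d0; case: hdx => c [_ ->]; rewrite d0 mul0r.
- by move=> y; rewrite inE => /predU1P [-> // | /hdiv]; exact: divides_trans.
- by move=> e he /(huniv' e he) [hg' hx']; apply: hdu.
Qed.

Lemma loc_min_elt P (t : seq K) : max_star D st P -> (exists2 y, y \in t & y != 0) ->
  exists2 m, m \in t & m != 0 /\ forall y, y \in t -> loc D P (y / m).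
Proof.
move=> hP; have hv := cond2_valuation hP.
have self m : m != 0 -> loc D P (m / m) by move=> m0; rewrite mulfV //; exact: loc1.
elim: t => [|x t IH] hnz; first by case: hnz.
case: (classic (exists2 y, y \in t & y != 0)) => hnz'; last first.
  have t0 y : y \in t -> y = 0 by move=> hy; apply: NNPP => /eqP ny; apply: hnz'; exists y.
  have x0 : x != 0 by case: hnz => y; rewrite inE => /predU1P [-> // | /t0 ->]; rewrite eqxx.
  exists x; first exact: mem_head.
  split => // y; rewrite inE => /predU1P [-> | /t0 ->]; [exact: self | rewrite mul0r; apply/(loc_dom hP)/dom0].
have [m mt [m0 hm]] := IH hnz'.
case: (eqVneq x 0) => [x0 | x0].
  exists m; first by rewrite inE mt orbT.
  by split => // y; rewrite inE => /predU1P [-> | /hm //]; rewrite x0 mul0r; apply/(loc_dom hP)/dom0.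
case: (hv (x / m) (mulf_neq0 x0 (invr_neq0 m0))) => hw.
  exists m; first by rewrite inE mt orbT.
  by split => // y; rewrite inE => /predU1P [-> | /hm].
rewrite invf_div in hw; exists x; first exact: mem_head.
split => // y; rewrite inE => /predU1P [-> | /hm hy]; first exact: self.
have -> : y / x = (y / m) * (m / x) by rewrite mulrA divfK.
exact: (locM hP).
Qed.

Lemma loc_common_denominator P m (t : seq K) : max_star D st P -> m != 0 ->
  (forall y, y \in t -> loc D P (y / m)) ->
  exists u, [/\ D u, ~ P u & forall y, y \in t -> divides D m (u * y)].
Proof.
move=> hP m0; elim: t => [|y t IH] hm.
  by exists 1; split => //; [exact: dom1 | exact: max_proper].
have [u [hu nu hud]] := IH (fun w hw => hm w (mem_behead (hw : w \in behead (y :: t)))).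
have [c [s [hc hs ns e]]] := hm y (mem_head _ _).
have s0 := max_neq0 hP ns.
have e' : y * s = c * m.
  by apply: (mulIf (invr_neq0 m0)); rewrite mulrAC e mulrAC !mulfK.
exists (u * s); split; [exact: domM | exact: max_notM |].
move=> w; rewrite inE => /predU1P [-> | hw].
  by exists (u * c); split; [exact: domM | rewrite -mulrA [s * y]mulrC e'; ring].
have [k [hk ek]] := hud w hw.
by exists (k * s); split; [exact: domM | rewrite mulrAC ek mulrA].
Qed.

(* The element m of t of least P-value, with denominators cleared by some u outside P, is
   divisible by the gcd of u t, which is u times a unit; so m in P would put u in P. *)
Lemma coprime_seq_notin_max P (t : seq K) : max_star D st P -> (forall y, y \in t -> D y) ->
  (exists2 y, y \in t & y != 0) -> coprime_seq t -> exists2 y, y \in t & ~ P y.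
Proof.
move=> hP ht hnz hcop.
have [m mt [m0 hm]] := loc_min_elt hP hnz.
have [u [hu nu hud]] := loc_common_denominator hP m0 hm.
have u0 := max_neq0 hP nu.
have htu y : y \in [seq u * y | y <- t] -> D y by case/mapP => z hz ->; apply: domM => //; apply: ht.
have [g [hg g0 hdiv huniv]] :=
  gcd_seq htu (ex_intro2 _ _ (u * m) (map_f _ mt) (mulf_neq0 u0 m0)).
have [k [hk ek]] : divides D u g.
  by apply: huniv => // y /mapP [z hz ->]; exists z; split => //; exact: ht.
have k0 : k != 0 by apply: contraNneq g0 => k0; rewrite ek k0 mulr0.
have hk' : D k^-1.
  apply: hcop => // y hy; have [c [hc ec]] := hdiv (u * y) (map_f _ hy).
  by exists c; split => //; apply: (mulfI u0); rewrite ec ek mulrA.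
have [w [hw ew]] : divides D m g by apply: huniv => [|y /mapP [z hz ->]]; [exact: ht | exact: hud].
exists m => // pm; apply: nu.
have -> : u = m * (w * k^-1) by apply: (mulIf k0); rewrite -ek ew mulrA mulfVK.
by apply: (maxMr hP) => //; exact: domM.
Qed.

Lemma st_gen_coprime (t : seq K) : (forall y, y \in t -> D y) -> (exists2 y, y \in t & y != 0) ->
  coprime_seq t -> st (gen D t) = D.
Proof.
move=> ht hnz hcop.
have fg := frac_ideal_gen (nonzero_gen_mem hnz).
have ig : subset (gen D t) D by apply: gen_int => i hi; apply/ht/mem_nth.
apply: (st_eq_dom fg ig); apply: NNPP => n1.
have [|P [hP sP]] := max_star_exists (I := st (gen D t)).
  by split; [exact: star_ideal_st | exact: st_int |].
have [y yt nPy] := coprime_seq_notin_max hP ht hnz hcop.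
by apply/nPy/sP/(st_ext fg)/gen_mem.
Qed.

Lemma gcd_cofactors_coprime g (t : seq K) : D g -> g != 0 ->
  (forall e, D e -> (forall y, y \in t -> divides D e y) -> divides D e g) ->
  coprime_seq [seq y / g | y <- t].
Proof.
move=> hg g0 huniv e he hde; apply: (divides_unit g0 he); apply: huniv; first exact: domM.
move=> y yt; have [c [hc ec]] := hde (y / g) (map_f _ yt).
by exists c; split => //; rewrite -mulrA -ec mulrC divfK.
Qed.

(* For the integral list t = d s and a gcd g of t, (t)^* = g (t/g)^* = g D since t/g is
   coprime, so (s)^* = (g/d) D. *)
Lemma cond2_finite_type_principal J : finite_type D st J -> is_principal D J.
Proof.
move=> [_ [J0 [[s /seteq_eq ->] nz /seteq_eq ->]]].
have [d [hd d0 hds]] := common_denominator s.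
pose t := [seq d * y | y <- s].
have ht y : y \in t -> D y.
  by case/(nthP 0) => i; rewrite size_map => hi <-; rewrite (nth_map 0) //; exact: hds.
have nzt : nonzero (gen D t).
  by rewrite gen_scale; case: nz => z [hz z0]; exists (d * z); split; [exists z | rewrite mulf_neq0].
have [y0 y0t y00] := gen_nonzero_mem nzt.
have [g [hg g0 hdiv huniv]] := gcd_seq ht (ex_intro2 _ _ y0 y0t y00).
pose t' := [seq y / g | y <- t].
have ht' y : y \in t' -> D y.
  by case/mapP => z zt ->; have [c [hc ->]] := hdiv z zt; rewrite mulrC mulKf.
have et : t = [seq g * y | y <- t'].
  by rewrite -map_comp -[LHS]map_id; apply: eq_map => w /=; rewrite mulrC divfK.
have nzt' : exists2 y, y \in t' & y != 0.
  by exists (y0 / g); [exact: map_f | rewrite mulf_neq0 ?invr_eq0].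
have stD := st_gen_coprime ht' nzt' (gcd_cofactors_coprime hg g0 huniv).
have ft' := frac_ideal_gen (nonzero_gen_mem nzt').
have e : scale d (st (gen D s)) = principal D g.
  rewrite -(st_scale d0 (frac_ideal_gen nz)) -gen_scale -/t et gen_scale (st_scale g0 ft') stD.
  by rewrite -[in RHS](mulr1 g) -scale_principal principal1.
exists (g / d); suff -> : st (gen D s) = principal D (g / d) by [].
by apply: (scale_inj d0); rewrite e scale_principal mulrCA mulfV // mulr1.
Qed.

Lemma cond2_max_seq x : D x -> x != 0 -> exists L, List.NoDup L /\
  forall P, List.In P L <-> max_star D st P /\ P x.
Proof.
move=> hx x0; case: hirkt => _ _ hlf _; have [l hl] := hlf x hx x0.
have [L [nd h]] := In_filter_NoDup (fun P => max_star D st P /\ P x) l.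
exists L; split => // P; rewrite h; split => [[] // | [hP Px]]; split => //.
by have [Q [hQ /seteq_eq ->]] := hl P hP Px.
Qed.

Lemma max_neq_witness P Q : max_star D st P -> max_star D st Q -> Q <> P ->
  exists y, P y /\ ~ Q y.
Proof.
move=> hP hQ nQP; apply: NNPP => hn.
have sPQ : subset P Q by move=> z Pz; apply: NNPP => nQz; apply: hn; exists z.
by apply: nQP; apply: seteq_eq => z; split; [exact: hP.2 Q hQ.1 sPQ z | exact: sPQ].
Qed.

(* With y in P but not in Q and y^n/x in D_P, the gcd d of e and y^n works: its cofactors are
   coprime, so one of them is a unit of D_P. *)
Lemma max_local_divisor_step P Q x e :
  max_star D st P -> max_star D st Q -> Q <> P -> P x -> x != 0 ->
  D e -> e != 0 -> loc D P (e / x) ->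
  exists d, [/\ D d, d != 0, divides D d e, loc D P (d / x) & ~ Q d].
Proof.
move=> hP hQ nQP Px x0 he e0 hex.
have [y [Py nQy]] := max_neq_witness hP hQ nQP.
have hy := max_int hP Py; have [n hn] := cond2_loc_power hP Px x0 Py.
have nQw : ~ Q (y ^+ n) by move/(prime_idealXn (max_prime_ideal hQ) hy).
have [d [hd hde hdw hdu]] := hgcd he (domX n hy) e0 (max_neq0 hQ nQw).
have d0 : d != 0 by apply: contraNneq e0 => d0; case: hde => c [_ ->]; rewrite d0 mul0r.
exists d; split => //; last by move=> Qd; apply: nQw; case: hdw => c [hc ->]; exact: maxMr.
have cof z : divides D d z -> D (z / d) by case=> c [hc ->]; rewrite mulrC mulKf.
have hcop : coprime_seq [seq z / d | z <- [:: e; y ^+ n]].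
  apply: gcd_cofactors_coprime hd d0 _ => f hf hdf.
  by apply: hdu => //; apply: hdf; rewrite !inE eqxx ?orbT.
have from_cof z : loc D P (z / x) -> divides D d z -> ~ P (z / d) -> loc D P (d / x).
  move=> hzx hdz nPz; have z0 : z != 0 by apply: contraNneq (max_neq0 hP nPz) => ->; rewrite mul0r.
  rewrite (_ : d / x = z / x * (z / d)^-1); last by rewrite invf_div; field; rewrite z0 x0.
  exact: (locM hP hzx (locV (cof z hdz) nPz)).
have hDt z : z \in [seq z / d | z <- [:: e; y ^+ n]] -> D z.
  by rewrite !inE => /orP [] /eqP ->; apply: cof.
have nzt : exists2 z, z \in [seq z / d | z <- [:: e; y ^+ n]] & z != 0.
  by exists (e / d); [exact: mem_head | rewrite mulf_neq0 ?invr_eq0].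
have [z + nPz] := coprime_seq_notin_max hP hDt nzt hcop.
by rewrite !inE => /orP [] /eqP ez; rewrite ez in nPz; apply: from_cof nPz.
Qed.

Lemma cond2_local_divisor P x (L : seq (K -> Prop)) : max_star D st P -> P x -> x != 0 ->
  (forall Q, List.In Q L -> max_star D st Q) ->
  exists e, [/\ D e, e != 0, divides D e x & loc D P (e / x)] /\
    forall Q, List.In Q L -> Q <> P -> ~ Q e.
Proof.
move=> hP Px x0; elim: L => [|Q L IH] hL.
  exists x; split; last by move=> Q [].
  by split => //; [exact: (max_int hP Px) | exact: divides_refl | rewrite mulfV //; exact: (loc1 hP)].
have [e [[he e0 hex hel] hne]] := IH (fun Q' hQ' => hL Q' (or_intror hQ')).
case: (classic (Q = P)) => [-> | nQP].
  by exists e; split => // Q' [<- // | hQ']; apply: hne.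
have [d [hd d0 hde hdl nQd]] :=
  max_local_divisor_step hP (hL Q (or_introl erefl)) nQP Px x0 he e0 hel.
exists d; split; first by split => //; exact: divides_trans hde hex.
move=> Q' [<- // | hQ' nQ'P Q'd]; apply: (hne Q' hQ' nQ'P).
by case: hde => c [hc ->]; apply: (maxMr (hL Q' (or_intror hQ'))).
Qed.

Lemma unique_max_homog P d : max_star D st P -> D d -> d != 0 -> P d ->
  (forall Q, max_star D st Q -> Q d -> Q = P) -> homog D st (principal D d).
Proof.
move=> hP hd d0 Pd huniq; have fd := frac_ideal_principal d0.
have sdP : subset (principal D d) P by move=> z [c [hc ->]]; exact: maxMr.
have sd : star_ideal D st (principal D d) by split => //; rewrite st_principal.
split.
- by split => //; [exact: principal_int | move/sdP; exact: max_proper].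
- split => //; exists (principal D d); split; first by exists [:: d]; rewrite gen1.
    by exists d; split => //; exact: principal_self.
  by rewrite st_principal.
move=> A B pA _ pB _ sA sB hs.
have below X : pint_star D st X -> subset (principal D d) X -> subset X P.
  move=> pX sdX; have [R [hR sXR]] := max_star_exists pX.
  by rewrite -(huniq R hR (sXR _ (sdX _ (principal_self d)))).
have [[fA _] iA _] := pA; have [[fB _] iB _] := pB.
have [sAm nzA _] := fA; have [sBm _ _] := fB.
have sABP : subset (sum_ideal A B) P.
  by move=> z [a [b [ha hb ->]]]; apply: (maxD hP); [exact: (below A pA sA) | exact: (below B pB sB)].
apply: (max_proper hP); apply: (max_st_least hP (frac_ideal_sum sAm sBm nzA iA iB) sABP).
by apply/hs; exact: dom1.
Qed.

Lemma unique_max_fhomog_type1 P d : max_star D st P -> D d -> d != 0 -> P d ->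
  (forall Q, max_star D st Q -> Q d -> Q = P) -> fhomog_type1 D st (principal D d).
Proof.
move=> hP hd d0 Pd huniq; have hom := unique_max_homog hP hd d0 Pd huniq.
split; first by split => // J hJ _; exact: cond2_finite_type_principal.
split => //; exists P; split => //; first by move=> z [c [hc ->]]; exact: maxMr.
move=> y Py y0; have [n hn] := cond2_loc_power hP Pd d0 Py.
exists n.+1; split => // z [w [hw ->]] hz.
exists (y ^+ n.+1 * w / d); split; last by field.
apply/cond2_int_loc => R hR; case: (classic (R = P)) => [-> | nRP].
  rewrite (_ : y ^+ n.+1 * w / d = y ^+ n / d * (y * w)); last by rewrite exprS; field.
  by apply: (locM hP) => //; apply: (locM hP) => //; apply/(loc_dom hP)/(max_int hP).
apply: (locM hR); first exact: (loc_dom hR).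
by apply: locV => // Rd; apply/nRP/huniq.
Qed.

Definition local_factor x P d :=
  [/\ D d, d != 0, divides D d x, loc D P (d / x) & forall Q, max_star D st Q -> Q d -> Q = P].

Definition loc_unit Q z := loc D Q z /\ loc D Q z^-1.

Lemma loc_unitM Q a b : max_star D st Q -> loc_unit Q a -> loc_unit Q b -> loc_unit Q (a * b).
Proof. by move=> hQ [h1 h2] [h3 h4]; split; rewrite ?invfM; exact: (locM hQ). Qed.

Lemma local_factors_loc_unit x Q L ds : max_star D st Q -> List.NoDup L ->
  List.Forall2 (local_factor x) L ds ->
  (List.In Q L -> loc_unit Q (\prod_(d <- ds) d / x)) /\
  (~ List.In Q L -> loc_unit Q (\prod_(d <- ds) d)).
Proof.
move=> hQ + hds; elim: hds => [|P d L1 ds1 [hd d0 hdx hdl hu] hF IH] hnd.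
  by split => [[] | _]; rewrite big_nil; split; rewrite ?invr1; exact: (loc1 hQ).
have [hnot hnd1] : ~ List.In P L1 /\ List.NoDup L1 by inversion hnd.
have [IH1 IH2] := IH hnd1; rewrite big_cons.
case: (classic (P = Q)) => [ePQ | nPQ].
  subst Q; split => [_ | []]; last by left.
  rewrite mulrAC; apply: loc_unitM => //; last exact: IH2.
  split => //; rewrite invf_div; case: hdx => c [hc ->].
  by rewrite mulrC mulKf //; exact: (loc_dom hQ).
have Vd : loc_unit Q d.
  by split; [exact: (loc_dom hQ) | apply: locV => // Qd; apply: nPQ; rewrite (hu Q hQ Qd)].
split => [[eQ | inQ] | ninQ]; first by case: nPQ.
  by rewrite -mulrA; apply: loc_unitM => //; exact: IH1.
by apply: loc_unitM => //; apply: IH2 => h; apply: ninQ; right.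
Qed.

Lemma local_factors_unit x L ds : D x -> List.NoDup L ->
  (forall P, List.In P L <-> max_star D st P /\ P x) ->
  List.Forall2 (local_factor x) L ds ->
  D (x / \prod_(d <- ds) d) /\ D (x / \prod_(d <- ds) d)^-1.
Proof.
move=> hx nd hL hds; split; apply/cond2_int_loc => Q hQ;
  have [k1 k2] := local_factors_loc_unit hQ nd hds; case: (classic (List.In Q L)) => inQ.
- by rewrite -invf_div; exact: (k1 inQ).2.
- have nQx : ~ Q x by move=> Qx; apply/inQ/hL.
  by apply: (locM hQ); [exact: (loc_dom hQ) | exact: (k2 inQ).2].
- by rewrite invf_div; exact: (k1 inQ).1.
- have nQx : ~ Q x by move=> Qx; apply/inQ/hL.
  by rewrite invf_div; apply: (locM hQ); [exact: (k2 inQ).1 | exact: locV].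
Qed.

Lemma cond2_cond1 : cond1 D st.
Proof.
move=> x hx x0 _.
have [L [nd hL]] := cond2_max_seq hx x0.
have [ds hds] : exists ds, List.Forall2 (local_factor x) L ds.
  apply: forall2_choice => P /hL [hP Px].
  have [e [[he e0 hex hel] hne]] := cond2_local_divisor hP Px x0 (fun Q hQ => proj1 ((hL Q).1 hQ)).
  exists e; split => // Q hQ Qe; apply: NNPP => nQP; apply: (hne Q _ nQP Qe); apply/hL.
  by split => //; case: hex => c [hc ->]; exact: maxMr.
have factor d : List.In d ds -> exists P, [/\ max_star D st P, P x & local_factor x P d].
  by move=> hd; have [P [/hL [hP Px] hPd]] := forall2_In_r hds hd; exists P.
have p0 : \prod_(d <- ds) d != 0.
  by apply: prodf_In_neq0 => d /factor [P [_ _ []]].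
have [hu hu'] := local_factors_unit hx nd hL hds.
have u0 : x / \prod_(d <- ds) d != 0 by rewrite mulf_neq0 ?invr_eq0.
exists (map (principal D) ds); split.
  move=> I /List.in_map_iff [d [<- hd]]; have [P [hP Px [hdD d0 _ hdl huq]]] := factor d hd.
  exact: unique_max_fhomog_type1 hP hdD d0 (max_of_loc_div hP hdD Px x0 hdl) huq.
rewrite prod_principal st_principal // -(principal_unitM (\prod_(d <- ds) d) u0 hu hu').
by rewrite divfK.
Qed.

End Cond2.
End Star.
End Ideals.

Theorem theoremS3 (K : fieldType) (D : K -> Prop) (st : (K -> Prop) -> (K -> Prop))
  (hD : is_domain_in D) (hst : star_fc D st) :
  cond1 D st <-> cond2 D st.
Proof.
split; first exact: cond1_cond2.
by case=> hgcd [hirkt hht]; exact: cond2_cond1.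
Qed.
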